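(* Let $f:\mathbb{N}_+\to\mathbb{N}_+$. Then $L_{I(A_f)}(A_f)(x)=L_{\mathbb{N}_+}\big(n\mapsto\sum_{k=1}^n f(k)\big)^{-1}(x)$ for all $x\in\mathbb{R}_{\ge0}$.
   Context: The sequence ''$n$ occurs $f(n)$ times'', $A_f$, is defined by $A_f\big(m+\sum_{k=1}^n f(k)\big)=n$ for all integers $n\ge1$ and $0\le m<f(n+1)$, with the convention $A_f(m)=0$ for $0\le m<f(1)$. Its set of increase-indices is $I(A_f)=\{n\in\mathbb{N}_+: A_f(n-1)<A_f(n)\}$ (which equals $\{\sum_{k=1}^n f(k): n\ge1\}$). For a function $h$ defined on an infinite set $S\subseteq\mathbb{N}_+$ with values in $\mathbb{N}$, the linear interpolation $L_S(h):\mathbb{R}_{\ge0}\to\mathbb{R}_{\ge0}$ is the polygonal chain starting at $(0,0)$ and passing through the points $(n,h(n))$, $n\in S$, in increasing order of $n$. $L_{\mathbb{N}_+}(n\mapsto\sum_{k=1}^n f(k))$ is strictly increasing and unbounded, hence invertible on $\mathbb{R}_{\ge0}$. *)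

From Stdlib Require Import Reals Lra Lia Arith ClassicalEpsilon.
Open Scope R_scope.

Fixpoint psum (f : nat -> nat) (n : nat) : nat :=
  match n with
  | O => O
  | S m => (psum f m + f (S m))%nat
  end.

(* A is "the sequence n occurs f(n) times" A_f, characterized by its
   defining equations (for all n >= 1, 0 <= m < f(n+1):
   A(m + sum_{k<=n} f k) = n, and A(m) = 0 for 0 <= m < f(1)). *)
Definition is_occurs_seq (f : nat -> nat) (A : nat -> nat) : Prop :=
  (forall n m : nat, (1 <= n)%nat -> (m < f (n + 1))%nat ->
       A (m + psum f n)%nat = n) /\
  (forall m : nat, (m < f 1)%nat -> A m = O).

Definition incr_indices (A : nat -> nat) (n : nat) : Prop :=
  (0 < n)%nat /\ (A (n - 1) < A n)%nat.

(* value at a node of the polygonal chain: (0,0) is the starting point *)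
Definition node_val (h : nat -> nat) (a : nat) : R :=
  if Nat.eqb a 0 then 0 else INR (h a).

(* v is the value at x of the polygonal chain starting at (0,0) and passing
   through the points (n, h n), n in S, in increasing order of n:
   x lies between two consecutive nodes a < b of {0} u S, and v is given by
   the linear interpolation on that segment. *)
Definition interp_at (S : nat -> Prop) (h : nat -> nat) (x v : R) : Prop :=
  exists a b : nat,
    (a = O \/ S a) /\ S b /\ (a < b)%nat /\
    (forall c : nat, (a < c < b)%nat -> ~ S c) /\
    INR a <= x <= INR b /\
    v = node_val h a + (x - INR a) / (INR b - INR a) * (node_val h b - node_val h a).

(* L_S(h) as a function on R (meaningful on R_{>=0}, S infinite subset of N_+) *)
Definition lin_interp (S : nat -> Prop) (h : nat -> nat) (x : R) : R :=
  epsilon (inhabits 0) (fun v => interp_at S h x v).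

Definition inv_fun (g : R -> R) (x : R) : R :=
  epsilon (inhabits 0) (fun y => 0 <= y /\ g y = x).

Definition posnat (n : nat) : Prop := (0 < n)%nat.

(* Both polygonal chains have the same breakpoints up to swapping coordinates:
   if s_k = f 1 + ... + f k, the chain of A_f has its nodes at (s_k, k) and the
   chain of the partial sums at (k, s_k).  On the k-th segment the two chains are
   therefore mutually inverse affine bijections between [s_k, s_(k+1)] and
   [k, k+1], so the first chain is the inverse of the second. *)
From Stdlib Require Import Reals.
From Stdlib Require Import Lra Lia Arith ClassicalEpsilon.
Open Scope R_scope.

Definition chord (a b c d x : R) : R := c + (x - a) / (b - a) * (d - c).

Lemma chord_left a b c d : chord a b c d a = c.
Proof. unfold chord, Rdiv. ring. Qed.

Lemma chord_right a b c d : a <> b -> chord a b c d b = d.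
Proof. intros Hab. unfold chord. field. lra. Qed.

Lemma chord_between a b c d x :
  a < b -> c <= d -> a <= x <= b -> c <= chord a b c d x <= d.
Proof.
  intros Hab Hcd Hx. unfold chord.
  assert (Hr : (x - a) / (b - a) * (b - a) = x - a) by (field; lra).
  assert (0 <= (x - a) / (b - a) <= 1) by nra.
  nra.
Qed.

Lemma chord_swap_cancel a b c d x :
  a < b -> c < d -> chord c d a b (chord a b c d x) = x.
Proof. intros Hab Hcd. unfold chord. field. lra. Qed.

Section StrictlyIncreasing.

Variable t : nat -> nat.
Hypothesis t_incr : forall k, (t k < t (S k))%nat.

Lemma incr_lt i j : (i < j)%nat -> (t i < t j)%nat.
Proof.
  intros Hij. induction Hij as [|j _ IH].
  - apply t_incr.
  - specialize (t_incr j). lia.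
Qed.

Lemma incr_lt_iff i j : (t i < t j)%nat <-> (i < j)%nat.
Proof.
  split; [|apply incr_lt].
  intros Ht. destruct (lt_eq_lt_dec i j) as [[Hlt|<-]|Hgt]; [exact Hlt|lia|].
  pose proof (incr_lt j i Hgt). lia.
Qed.

Lemma incr_ge_id k : (k <= t k)%nat.
Proof. induction k as [|k IH]; [lia|]. specialize (t_incr k). lia. Qed.

Hypothesis t_zero : t O = O.

Lemma incr_bracket x : 0 <= x -> exists k, INR (t k) <= x <= INR (t (S k)).
Proof.
  intros Hx. destruct (INR_unbounded x) as [N HN].
  assert (HtN : x < INR (t N)) by (pose proof (le_INR _ _ (incr_ge_id N)); lra).
  clear HN. induction N as [|N IH].
  - rewrite t_zero in HtN. simpl in HtN. lra.
  - destruct (Rlt_le_dec x (INR (t N))) as [Hlt|Hle]; [exact (IH Hlt)|].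
    exists N. lra.
Qed.

Lemma incr_bracket_nat j : exists k, (t k <= j < t (S k))%nat.
Proof.
  destruct (incr_bracket (INR j) (pos_INR j)) as [k [Hl Hr]].
  apply INR_le in Hl. apply INR_le in Hr.
  destruct (Nat.eq_dec j (t (S k))) as [->|Hne].
  - exists (S k). specialize (t_incr (S k)). lia.
  - exists k. lia.
Qed.

End StrictlyIncreasing.

(* [t] enumerates the nodes {0} ∪ P of the chain L_P(h) in increasing order
   and [u k] is the height of the chain at its k-th node. *)
Record chain_nodes (P : nat -> Prop) (h t u : nat -> nat) : Prop := {
  nodes_start : t O = O;
  nodes_incr : forall k, (t k < t (S k))%nat;
  nodes_spec : forall n, P n <-> exists k, (1 <= k)%nat /\ t k = n;
  nodes_val : forall k, node_val h (t k) = INR (u k) }.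

Arguments nodes_start {P h t u}.
Arguments nodes_incr {P h t u}.
Arguments nodes_spec {P h t u}.
Arguments nodes_val {P h t u}.

Definition piece (t u : nat -> nat) (k : nat) : R -> R :=
  chord (INR (t k)) (INR (t (S k))) (INR (u k)) (INR (u (S k))).

Section PolygonalChain.

Variables (P : nat -> Prop) (h t u : nat -> nat).
Hypothesis nodes : chain_nodes P h t u.

Lemma interp_at_piece k x :
  INR (t k) <= x <= INR (t (S k)) -> interp_at P h x (piece t u k x).
Proof.
  intros Hx. exists (t k), (t (S k)).
  split; [|split; [|split; [|split; [|split]]]].
  - destruct k as [|k]; [left; apply (nodes_start nodes)|right].
    apply (nodes_spec nodes). exists (S k). split; [lia|reflexivity].
  - apply (nodes_spec nodes). exists (S k). split; [lia|reflexivity].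
  - apply (nodes_incr nodes).
  - intros c [Hkc Hck] Hc. apply (nodes_spec nodes) in Hc as [j [_ <-]].
    rewrite (incr_lt_iff _ (nodes_incr nodes)) in Hkc, Hck. lia.
  - exact Hx.
  - unfold piece, chord. rewrite !(nodes_val nodes). reflexivity.
Qed.

Lemma interp_at_piece_inv x v : interp_at P h x v ->
  exists k, INR (t k) <= x <= INR (t (S k)) /\ v = piece t u k x.
Proof.
  intros [a [b [Ha [Hb [Hab [Hgap [Hx ->]]]]]]].
  assert (Hka : exists ka, t ka = a).
  { destruct Ha as [->|Ha]; [exists O; apply (nodes_start nodes)|].
    apply (nodes_spec nodes) in Ha as [k [_ Hk]]. eauto. }
  destruct Hka as [ka <-].
  apply (nodes_spec nodes) in Hb as [kb [_ <-]].
  rewrite (incr_lt_iff _ (nodes_incr nodes)) in Hab.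
  assert (kb = S ka) as ->.
  { destruct (Nat.eq_dec kb (S ka)) as [|Hne]; [assumption|exfalso].
    apply (Hgap (t (S ka))).
    - rewrite !(incr_lt_iff _ (nodes_incr nodes)). lia.
    - apply (nodes_spec nodes). exists (S ka). split; [lia|reflexivity]. }
  exists ka. split; [exact Hx|].
  unfold piece, chord. rewrite !(nodes_val nodes). reflexivity.
Qed.

Lemma piece_unique k k' x :
  INR (t k) <= x <= INR (t (S k)) -> INR (t k') <= x <= INR (t (S k')) ->
  piece t u k x = piece t u k' x.
Proof.
  assert (Hlt : forall k k', (k < k')%nat ->
    INR (t k) <= x <= INR (t (S k)) -> INR (t k') <= x <= INR (t (S k')) ->
    piece t u k x = piece t u k' x).
  { intros i j Hij Hi Hj.
    assert (j = S i) as ->.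
    { destruct (Nat.eq_dec j (S i)) as [|Hne]; [assumption|].
      pose proof (lt_INR _ _ (incr_lt _ (nodes_incr nodes) (S i) j ltac:(lia))).
      lra. }
    assert (x = INR (t (S i))) as -> by lra.
    pose proof (lt_INR _ _ (nodes_incr nodes i)).
    unfold piece. rewrite chord_right, chord_left by lra. reflexivity. }
  intros Hk Hk'. destruct (lt_eq_lt_dec k k') as [[Hkk'|<-]|Hk'k].
  - exact (Hlt k k' Hkk' Hk Hk').
  - reflexivity.
  - symmetry. exact (Hlt k' k Hk'k Hk' Hk).
Qed.

Lemma lin_interp_piece k x :
  INR (t k) <= x <= INR (t (S k)) -> lin_interp P h x = piece t u k x.
Proof.
  intros Hx. unfold lin_interp.
  destruct (interp_at_piece_inv _ _ (epsilon_spec (inhabits 0) (fun v => interp_at P h x v)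
              (ex_intro _ _ (interp_at_piece k x Hx)))) as [k' [Hk' ->]].
  exact (piece_unique k' k x Hk' Hx).
Qed.

End PolygonalChain.

Lemma lin_interp_cancel P h Q g t u :
  chain_nodes P h t u -> chain_nodes Q g u t -> forall x, 0 <= x ->
  0 <= lin_interp P h x /\ lin_interp Q g (lin_interp P h x) = x.
Proof.
  intros Htu Hut x Hx.
  destruct (incr_bracket t (nodes_incr Htu) (nodes_start Htu) x Hx) as [k Hk].
  pose proof (lt_INR _ _ (nodes_incr Htu k)) as Ht.
  pose proof (lt_INR _ _ (nodes_incr Hut k)) as Hu.
  rewrite (lin_interp_piece _ _ _ _ Htu k x Hk).
  assert (Hy : INR (u k) <= piece t u k x <= INR (u (S k)))
    by (apply chord_between; lra).
  split.
  - pose proof (pos_INR (u k)). lra.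
  - rewrite (lin_interp_piece _ _ _ _ Hut k _ Hy). apply chord_swap_cancel; lra.
Qed.

Lemma inv_fun_eq (g : R -> R) x y :
  0 <= y -> g y = x -> (forall z, 0 <= z -> g z = x -> z = y) -> inv_fun g x = y.
Proof.
  intros Hy Hgy Huniq. unfold inv_fun.
  destruct (epsilon_spec (inhabits 0) (fun z => 0 <= z /\ g z = x)
              (ex_intro _ y (conj Hy Hgy))) as [Hz Hgz].
  exact (Huniq _ Hz Hgz).
Qed.

Section OccursSequence.

Variables f A : nat -> nat.
Hypothesis hf : forall n : nat, (0 < n)%nat -> (0 < f n)%nat.
Hypothesis hA : is_occurs_seq f A.

Lemma psum_incr k : (psum f k < psum f (S k))%nat.
Proof. simpl. specialize (hf (S k) ltac:(lia)). lia. Qed.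

Lemma psum_pos k : (1 <= k)%nat -> (0 < psum f k)%nat.
Proof. intros Hk. destruct k as [|k]; [lia|]. specialize (psum_incr k). lia. Qed.

Lemma chain_nodes_psum : chain_nodes posnat (psum f) (fun n => n) (psum f).
Proof.
  split; [reflexivity|intros; lia| |].
  - intros n. unfold posnat. split.
    + intros Hn. exists n. split; [lia|reflexivity].
    + intros [k [Hk <-]]. lia.
  - intros [|k]; reflexivity.
Qed.

Lemma occurs_seq_block n j :
  (psum f n <= j < psum f (S n))%nat -> A j = n.
Proof.
  destruct hA as [hA_succ hA_zero]. intros Hj. destruct n as [|n].
  - apply hA_zero. simpl in Hj. lia.
  - replace j with (j - psum f (S n) + psum f (S n))%nat by lia.
    apply hA_succ; [lia|].
    rewrite Nat.add_1_r. simpl in Hj |- *. lia.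
Qed.

Lemma incr_indices_occurs_seq n :
  incr_indices A n <-> exists k, (1 <= k)%nat /\ psum f k = n.
Proof.
  split.
  - intros [Hn Hinc].
    destruct (incr_bracket_nat (psum f) psum_incr eq_refl n) as [m Hm].
    destruct (Nat.eq_dec (psum f m) n) as [<-|Hne].
    + exists m. split; [|reflexivity].
      destruct m; [simpl in Hn; lia|lia].
    + rewrite (occurs_seq_block m n), (occurs_seq_block m (n - 1)) in Hinc by lia.
      lia.
  - intros [[|k] [Hk <-]]; [lia|]. split; [apply psum_pos; lia|].
    pose proof (psum_incr k). pose proof (psum_incr (S k)).
    rewrite (occurs_seq_block (S k) (psum f (S k))),
            (occurs_seq_block k (psum f (S k) - 1)) by lia.
    lia.
Qed.

Lemma chain_nodes_occurs_seq :
  chain_nodes (incr_indices A) A (psum f) (fun n => n).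
Proof.
  split; [reflexivity|exact psum_incr|exact incr_indices_occurs_seq|].
  intros [|k]; [reflexivity|].
  unfold node_val. pose proof (psum_pos (S k) ltac:(lia)).
  destruct (Nat.eqb_spec (psum f (S k)) 0) as [Hz|_]; [lia|].
  pose proof (psum_incr (S k)).
  rewrite (occurs_seq_block (S k) (psum f (S k))) by lia. reflexivity.
Qed.

End OccursSequence.

Theorem lemma2 (f : nat -> nat) (A : nat -> nat)
  (hf : forall n : nat, (0 < n)%nat -> (0 < f n)%nat)
  (hA : is_occurs_seq f A) :
  forall x : R, 0 <= x ->
    lin_interp (incr_indices A) A x = inv_fun (lin_interp posnat (psum f)) x.
Proof.
  intros x Hx.
  pose proof (chain_nodes_psum f) as Hpsum.
  pose proof (chain_nodes_occurs_seq f A hf hA) as HA.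
  destruct (lin_interp_cancel _ _ _ _ _ _ HA Hpsum x Hx) as [Hpos Hcancel].
  symmetry. apply inv_fun_eq; [exact Hpos|exact Hcancel|].
  intros y Hy <-.
  symmetry. exact (proj2 (lin_interp_cancel _ _ _ _ _ _ Hpsum HA y Hy)).
Qed.
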